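(* Let $a$ be a positive integer and let $P_a = \{C_{i,a+1} : 1 \le i \le 2a+1\} \cup \{C_{a+1,j} : 1 \le j \le 2a+1\}$ be the plus polyomino, of size $n = 4a+1$. Then on the $n \times n$ board, $\mathrm{cp}(P_a) = 1$, where $\mathrm{cp}(P_a)$ denotes the common value $\mathrm{cp}_{\mathrm{fixed}}(P_a) = \mathrm{cp}_{\mathrm{free}}(P_a)$.
   Context: For integers $i,j$, $C_{i,j}$ denotes the unit square cell in column $i$ and row $j$ of the integer grid (columns numbered left to right, rows numbered top to bottom). A polyomino is a finite set of cells; its size is its number of cells. For a polyomino $\mathcal{P}$ of size $n$ the board is $\mathbb{B} = \{C_{i,j} : 1 \le i,j \le n\}$. The shift of $\mathcal{P}$ by integers $(c,d)$ is $\mathcal{P}+(c,d) = \{C_{x+c,y+d} : C_{x,y} \in \mathcal{P}\}$. A fixed copy of $\mathcal{P}$ is any shift of $\mathcal{P}$; a free copy is any shift of a rotation of $\mathcal{P}$ by a multiple of $90^\circ$ (for $P_a$, every rotation equals $P_a$, so fixed and free copies coincide). A set of polyominoes is a valid arrangement if each is contained in $\mathbb{B}$ and they are pairwise disjoint. A fixed (resp. free) packing of $\mathcal{P}$ is a set of fixed (resp. free) copies of $\mathcal{P}$ forming a valid arrangement such that adding any further fixed (resp. free) copy yields an invalid arrangement. The clumsy fixed (resp. free) packing number $\mathrm{cp}_{\mathrm{fixed}}(\mathcal{P})$ (resp. $\mathrm{cp}_{\mathrm{free}}(\mathcal{P})$) is the minimum number of polyominoes in such a packing on the $n\times n$ board.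 *)

From HB Require Import structures.
From mathcomp Require Import all_boot all_order all_algebra.
From mathcomp Require Import finmap.
Set Implicit Arguments. Unset Strict Implicit. Unset Printing Implicit Defensive.
Import Order.TTheory GRing.Theory Num.Theory.
Local Open Scope ring_scope.
Local Open Scope fset_scope.

(* A cell C_{i,j} is represented by the pair (i, j) : column i, row j. *)
Definition cell := (int * int)%type.
Definition polyomino := {fset cell}.

Definition shift (P : polyomino) (d : cell) : polyomino :=
  [fset ((x.1 + d.1)%R, (x.2 + d.2)%R) | x in P].

Definition rot90 (P : polyomino) : polyomino :=
  [fset ((- x.2)%R, x.1) | x in P].

Definition fixed_copy (P Q : polyomino) : Prop :=
  exists d : cell, Q = shift P d.

Definition free_copy (P Q : polyomino) : Prop :=
  exists (k : nat) (d : cell), (k < 4)%N /\ Q = shift (iter k rot90 P) d.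

Definition in_board (n : nat) (c : cell) : bool :=
  (1 <= c.1 <= n%:Z) && (1 <= c.2 <= n%:Z).

(* A (finite set, given as a duplicate-free list of) polyominoes is a valid
   arrangement: each contained in the board, pairwise disjoint. *)
Definition valid_arrangement (n : nat) (L : seq polyomino) : Prop :=
  uniq L /\
  (forall Q, Q \in L -> forall c, c \in Q -> in_board n c) /\
  (forall Q1 Q2, Q1 \in L -> Q2 \in L -> Q1 != Q2 -> [disjoint Q1 & Q2]).

Definition is_packing (copy : polyomino -> polyomino -> Prop)
    (P : polyomino) (n : nat) (L : seq polyomino) : Prop :=
  (forall Q, Q \in L -> copy P Q) /\
  valid_arrangement n L /\
  (forall Q, copy P Q -> Q \notin L -> ~ valid_arrangement n (Q :: L)).

Definition is_clumsy_packing_number (copy : polyomino -> polyomino -> Prop)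
    (P : polyomino) (k : nat) : Prop :=
  let n := #|` P| in
  (exists L, is_packing copy P n L /\ size L = k) /\
  (forall L, is_packing copy P n L -> (k <= size L)%N).

Definition plus_polyomino (a : nat) : polyomino :=
  [fset ((i.+1)%:Z, (a.+1)%:Z) | i in iota 0 (2 * a + 1)]
  `|` [fset ((a.+1)%:Z, (j.+1)%:Z) | j in iota 0 (2 * a + 1)].

From HB Require Import structures.
From mathcomp Require Import all_boot all_order all_algebra.
From mathcomp Require Import finmap zify.
Import Order.TTheory GRing.Theory Num.Theory.
Local Open Scope fset_scope.
Local Open Scope ring_scope.

(* Every copy of P_a that fits in the (4a+1) x (4a+1) board is a translate
   P_a + (d1, d2) with 0 <= d1, d2 <= 2a, so its horizontal arm crosses the
   middle column 2a+1 in a row between a+1 and 3a+1, i.e. inside the vertical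
   arm of the centred copy P_a + (a, a).  Hence the centred copy alone is
   already a maximal packing, and it is the smallest since the empty
   arrangement is not maximal.  Rotations do not help: P_a is invariant under
   a quarter turn up to translation, so free and fixed copies coincide. *)

Definition in_board_set (n : nat) (Q : polyomino) : Prop :=
  forall c, c \in Q -> in_board n c.

Lemma clumsy_packing_number_1 (copy : polyomino -> polyomino -> Prop)
    (P Q0 : polyomino) :
  copy P Q0 -> in_board_set #|` P| Q0 ->
  (forall Q, copy P Q -> Q != Q0 -> in_board_set #|` P| Q ->
     ~~ [disjoint Q & Q0]%fset) ->
  is_clumsy_packing_number copy P 1.
Proof.
move=> copyQ0 boardQ0 meetQ0.
have validQ0 : valid_arrangement #|` P| [:: Q0].
  split=> //; split; first by move=> Q; rewrite inE => /eqP ->.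
  by move=> Q1 Q2; rewrite !inE => /eqP -> /eqP ->; rewrite eqxx.
split.
  exists [:: Q0]; split=> //; split; first by move=> Q; rewrite inE => /eqP ->.
  split=> // Q copyQ; rewrite inE => neQ [_ [boardL disjL]].
  have boardQ : in_board_set #|` P| Q by apply: boardL; exact: mem_head.
  have := disjL Q Q0 (mem_head _ _) (mem_last _ [:: Q0]) neQ.
  by apply/negP; exact: meetQ0.
by case=> [[_ [_ maxL]] | //]; exfalso; apply: (maxL Q0).
Qed.

Lemma mem_shift (P : polyomino) (d c : cell) :
  (c \in shift P d) = ((c.1 - d.1, c.2 - d.2) \in P).
Proof.
apply/imfsetP/idP => /=.
  by move=> [x Px ->] /=; rewrite !addrK; case: x Px.
by move=> Pc; exists (c.1 - d.1, c.2 - d.2); rewrite //= !subrK; case: c Pc.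
Qed.

Lemma mem_rot90 (P : polyomino) (c : cell) :
  (c \in rot90 P) = ((c.2, - c.1) \in P).
Proof.
apply/imfsetP/idP => /=.
  by move=> [x Px ->] /=; rewrite opprK; case: x Px.
by move=> Pc; exists (c.2, - c.1); rewrite //= opprK; case: c Pc.
Qed.

Lemma shift0 (P : polyomino) : shift P (0, 0) = P.
Proof. by apply/fsetP => c; rewrite mem_shift !subr0; case: c. Qed.

Lemma shift_shift (P : polyomino) (d e : cell) :
  shift (shift P d) e = shift P (d.1 + e.1, d.2 + e.2).
Proof.
apply/fsetP => c.
by rewrite !mem_shift /= !opprD !addrA (addrAC c.1) (addrAC c.2).
Qed.

Lemma rot90_shift (P : polyomino) (d : cell) :
  rot90 (shift P d) = shift (rot90 P) (- d.2, d.1).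
Proof.
by apply/fsetP => c; rewrite mem_rot90 !mem_shift mem_rot90 /= opprK opprD.
Qed.

Lemma iter_rot90_shift (P : polyomino) (e : cell) :
  rot90 P = shift P e ->
  forall k, exists d, iter k rot90 P = shift P d.
Proof.
move=> rotP; elim=> [|k [d IHk]]; first by exists (0, 0); rewrite shift0.
by eexists; rewrite iterS IHk rot90_shift rotP shift_shift.
Qed.

Lemma iota_succ_intP (m : nat) (z : int) :
  (exists2 i, i \in iota 0 m & z = (i.+1)%:Z) <-> (1 <= z <= m%:Z).
Proof.
split; first by move=> [i]; rewrite mem_iota => ? ->; lia.
by move=> ?; exists `|z - 1|%N; rewrite ?mem_iota; lia.
Qed.

Section PlusPolyomino.
Variable a : nat.

Definition plus_row : polyomino :=
  [fset ((i.+1)%:Z, (a.+1)%:Z) | i in iota 0 (2 * a + 1)].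
Definition plus_column : polyomino :=
  [fset ((a.+1)%:Z, (j.+1)%:Z) | j in iota 0 (2 * a + 1)].

Lemma plus_polyominoE : plus_polyomino a = plus_row `|` plus_column.
Proof. by []. Qed.

Lemma mem_plus_row (c : cell) :
  (c \in plus_row) = (c.2 == (a.+1)%:Z) && (1 <= c.1 <= (2 * a + 1)%:Z).
Proof.
case: c => x y; apply/imfsetP/andP => /=.
  by move=> [i ? [-> ->]]; split=> //; apply/iota_succ_intP; exists i.
by move=> [/eqP -> /iota_succ_intP [i ? ->]]; exists i.
Qed.

Lemma mem_plus_column (c : cell) :
  (c \in plus_column) = (c.1 == (a.+1)%:Z) && (1 <= c.2 <= (2 * a + 1)%:Z).
Proof.
case: c => x y; apply/imfsetP/andP => /=.
  by move=> [j ? [-> ->]]; split=> //; apply/iota_succ_intP; exists j.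
by move=> [/eqP -> /iota_succ_intP [j ? ->]]; exists j.
Qed.

Lemma mem_plus_polyomino (c : cell) :
  (c \in plus_polyomino a) =
  (c.2 == (a.+1)%:Z) && (1 <= c.1 <= (2 * a + 1)%:Z) ||
  (c.1 == (a.+1)%:Z) && (1 <= c.2 <= (2 * a + 1)%:Z).
Proof. by rewrite plus_polyominoE in_fsetU mem_plus_row mem_plus_column. Qed.

Lemma card_plus_polyomino : #|` plus_polyomino a| = (4 * a + 1)%N.
Proof.
have card_arm (f : nat -> cell) : injective f ->
    #|` [fset f i | i in iota 0 (2 * a + 1)]| = (2 * a + 1)%N.
  by move=> f_inj; rewrite card_imfset //= undup_id ?iota_uniq // size_iota.
have centre : plus_row `&` plus_column = [fset ((a.+1)%:Z, (a.+1)%:Z)].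
  apply/fsetP => -[x y]; rewrite in_fsetI mem_plus_row mem_plus_column in_fset1.
  by rewrite xpair_eqE /=; lia.
have := cardfsUI plus_row plus_column.
by rewrite -plus_polyominoE centre cardfs1 !card_arm => [|i j []|i j []]; lia.
Qed.

Lemma rot90_plus_polyomino :
  rot90 (plus_polyomino a) = shift (plus_polyomino a) (- (2 * a + 2)%:Z, 0).
Proof.
apply/fsetP => -[x y]; rewrite mem_rot90 mem_shift !mem_plus_polyomino /=; lia.
Qed.

Lemma free_copy_plus_polyomino (Q : polyomino) :
  free_copy (plus_polyomino a) Q -> fixed_copy (plus_polyomino a) Q.
Proof.
move=> [k [d [_ ->]]].
have [e ->] := iter_rot90_shift _ _ rot90_plus_polyomino k.
by rewrite shift_shift; eexists.
Qed.

Definition centred_plus : polyomino := shift (plus_polyomino a) (a%:Z, a%:Z).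

Lemma centred_plus_in_board : in_board_set (4 * a + 1) centred_plus.
Proof.
by move=> -[x y]; rewrite mem_shift mem_plus_polyomino /in_board /=; lia.
Qed.

Lemma fixed_copy_plus_meets_centre (Q : polyomino) :
  fixed_copy (plus_polyomino a) Q -> in_board_set (4 * a + 1) Q ->
  ~~ [disjoint Q & centred_plus]%fset.
Proof.
move=> [[d1 d2] ->] board.
have cell_in_board (x y : int) :
    (x - d1, y - d2) \in plus_polyomino a -> in_board (4 * a + 1) (x, y).
  by move=> ?; apply: board; rewrite mem_shift.
have := cell_in_board (d1 + 1) (d2 + (a.+1)%:Z).
have := cell_in_board (d1 + (2 * a + 1)%:Z) (d2 + (a.+1)%:Z).
have := cell_in_board (d1 + (a.+1)%:Z) (d2 + 1).
have := cell_in_board (d1 + (a.+1)%:Z) (d2 + (2 * a + 1)%:Z).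
rewrite !mem_plus_polyomino /in_board /= => ? ? ? ?.
apply/negP => /fdisjointP /(_ ((2 * a + 1)%:Z, d2 + (a.+1)%:Z)).
rewrite !mem_shift !mem_plus_polyomino /=; lia.
Qed.

End PlusPolyomino.

Theorem theorem10 (a : nat) (ha : (0 < a)%N) :
  #|` plus_polyomino a| = (4 * a + 1)%N /\
  is_clumsy_packing_number fixed_copy (plus_polyomino a) 1 /\
  is_clumsy_packing_number free_copy (plus_polyomino a) 1.
Proof.
split; first exact: card_plus_polyomino.
split; apply: (clumsy_packing_number_1 _ _ (centred_plus a));
  rewrite ?card_plus_polyomino; try exact: centred_plus_in_board.
- by exists (a%:Z, a%:Z).
- by move=> Q copyQ _; apply: fixed_copy_plus_meets_centre copyQ.
- by exists 0%N, (a%:Z, a%:Z).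
- move=> Q /free_copy_plus_polyomino copyQ _.
  exact: fixed_copy_plus_meets_centre copyQ.
Qed.
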